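(* Let $K$ be a field, $m\ge2$, $d_1,\ldots,d_m$ positive integers, and $b_i=\prod_{j\ne i}d_j$ for $1\le i\le m$. Let $I_{\mathcal{A}}\subset K[x_1,\ldots,x_m,y_1,\ldots,y_m]$ be the kernel of the $K$-algebra homomorphism $\phi$ to $K[t_1,\ldots,t_{m+1}]$ given by $\phi(x_i)=t_1^{b_i}t_{i+1}$ and $\phi(y_i)=t_{i+1}$ for $1\le i\le m$. Then $\mathrm{bar}(I_{\mathcal{A}})\ge\frac{m(m-1)}{2}$.
   Context: $\mathcal{A}$ is the set of columns of the $(m+1)\times 2m$ matrix $\begin{pmatrix} b_1\ \cdots\ b_m & 0\ \cdots\ 0\\ I_m & I_m\end{pmatrix}$ (Lawrence lifting of $(b_1,\ldots,b_m)$). $\mathrm{bar}(I)$ is the least $s$ such that there are binomials $B_1,\ldots,B_s\in I$ with $\mathrm{rad}(I)=\mathrm{rad}(B_1,\ldots,B_s)$. *)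

From HB Require Import structures.
From mathcomp Require Import all_boot all_order all_algebra.
From mathcomp Require Import mpoly.
Set Implicit Arguments. Unset Strict Implicit. Unset Printing Implicit Defensive.
Import GRing.Theory.
Local Open Scope ring_scope.

(* Variables of K[x_1..x_m, y_1..y_m]: index i : 'I_(m+m);
   lshift m j <-> x_(j+1), rshift m j <-> y_(j+1).
   Variables of K[t_1..t_(m+1)]: ord0 <-> t_1, lift ord0 j <-> t_(j+2). *)

Definition bexp (m : nat) (d : 'I_m -> nat) (i : 'I_m) : nat :=
  (\prod_(j < m | j != i) d j)%N.

Definition phi_var (K : fieldType) (m : nat) (d : 'I_m -> nat)
  (k : 'I_(m + m)) : {mpoly K[m.+1]} :=
  match split k with
  | inl i => 'X_(@ord0 m) ^+ bexp d i * 'X_(lift ord0 i)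
  | inr i => 'X_(lift ord0 i)
  end.

Definition phi (K : fieldType) (m : nat) (d : 'I_m -> nat)
  (p : {mpoly K[m + m]}) : {mpoly K[m.+1]} :=
  mmap (@mpolyC m.+1 K) (@phi_var K m d) p.

Definition toric_ideal (K : fieldType) (m : nat) (d : 'I_m -> nat)
  (p : {mpoly K[m + m]}) : Prop := @phi K m d p = 0.

Definition is_binomial (K : fieldType) (n : nat) (p : {mpoly K[n]}) : Prop :=
  exists (a b : K) (u v : 'X_{1..n}), p = a *: 'X_[u] + b *: 'X_[v].

Definition gen_ideal (K : fieldType) (n s : nat) (B : 'I_s -> {mpoly K[n]})
  (p : {mpoly K[n]}) : Prop :=
  exists g : 'I_s -> {mpoly K[n]}, p = \sum_(i < s) g i * B i.

Definition radical (K : fieldType) (n : nat) (I : {mpoly K[n]} -> Prop)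
  (p : {mpoly K[n]}) : Prop := exists k : nat, I (p ^+ k).

(* bar(I) <= s is witnessed by s binomials in I with the same radical;
   bar(I) >= N iff every such family has s >= N. *)
Definition binomial_radical_gens (K : fieldType) (n : nat)
  (I : {mpoly K[n]} -> Prop) (s : nat) : Prop :=
  exists B : 'I_s -> {mpoly K[n]},
    (forall i, is_binomial (B i) /\ I (B i)) /\
    (forall p, radical I p <-> radical (gen_ideal B) p).

From HB Require Import structures.
From mathcomp Require Import all_boot all_order all_algebra.
From mathcomp Require Import mpoly.
From mathcomp Require Import zify.
Set Implicit Arguments. Unset Strict Implicit. Unset Printing Implicit Defensive.
Import GRing.Theory.
Local Open Scope ring_scope.

(* For a set A of indices, let keep_blocks A be the substitution killing the
   variables x_k, y_k with k outside A.  For each pair A = {i, j} the binomial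
   x_i^(d_i) y_j^(d_j) - y_i^(d_i) x_j^(d_j) lies in I_A (both monomials map to
   t_1^(d_1...d_m) t_(i+1)^(d_i) t_(j+1)^(d_j)) and is fixed by keep_blocks A.
   It lies in the radical of (B_1, ..., B_s) and keep_blocks A maps into a
   domain, so some B_l survives keep_blocks A.  Conversely, a nonzero binomial
   of I_A involves at least two indices, because phi is injective on monomials in
   x_k, y_k for a single k; and it survives keep_blocks A only if all its indices
   lie in A.  So each B_l survives for at most one pair, and the m(m-1)/2 pairs
   inject into the generators. *)

Lemma card_2subsets (T : finType) :
  (#|T| * (#|T| - 1) = 2 * #|[set A : {set T} | #|A| == 2]|)%N.
Proof.
by rewrite card_draws [RHS]mulnC -[2%N]/(2`!) bin_ffact ffactnS ffactn1 subn1.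
Qed.

Lemma leq_card_witness (T U : finType) (A : {set T}) (R : T -> U -> bool) :
  (forall x, x \in A -> exists y, R x y) ->
  (forall x x' y, x \in A -> x' \in A -> R x y -> R x' y -> x = x') ->
  (#|A| <= #|U|)%N.
Proof.
move=> exR uniqR; have [x0 Ax0 | A0] := pickP (mem A); last by rewrite eq_card0.
have [y0 _] := exR x0 Ax0.
pose g x := odflt y0 [pick y | R x y].
have Rg x : x \in A -> R x (g x).
  move=> Ax; rewrite /g; case: pickP => [//|noR].
  by have [y] := exR x Ax; rewrite noR.
apply: (@leq_card_in _ _ g) => x x' Ax Ax' gxx'.
by apply: (uniqR _ _ (g x) Ax Ax' (Rg x Ax)); rewrite gxx' Rg.
Qed.

Lemma split_lshift m n (i : 'I_m) : split (lshift n i) = inl i.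
Proof. exact: (unsplitK (inl i)). Qed.

Lemma split_rshift m n (i : 'I_n) : split (rshift m i) = inr i.
Proof. exact: (unsplitK (inr i)). Qed.

Lemma lshift_neq_rshift m n (i : 'I_m) (j : 'I_n) :
  (lshift n i == rshift m j) = false.
Proof. by rewrite -val_eqE /= ltn_eqF // (leq_trans (ltn_ord i)) ?leq_addr. Qed.

Lemma binomial_eq0 (R : nzRingType) n (a b : R) (p q : 'X_{1..n}) :
  (a *: 'X_[p] + b *: 'X_[q] == 0) =
  if p == q then a + b == 0 else (a == 0) && (b == 0).
Proof.
have [<- | pq] := eqVneq p q.
  rewrite -scalerDl; apply/eqP/eqP => [/(congr1 (mcoeff p)) | ->]; last first.
    by rewrite scale0r.
  by rewrite mcoeffZ mcoeffX eqxx mulr1 mcoeff0.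
apply/eqP/andP => [pq0 | [/eqP-> /eqP->]]; last by rewrite !scale0r addr0.
have := congr1 (mcoeff q) pq0; have := congr1 (mcoeff p) pq0.
rewrite !mcoeffD !mcoeffZ !mcoeffX !eqxx (negbTE pq) eq_sym (negbTE pq) !mcoeff0.
by rewrite !mulr1 !mulr0 addr0 add0r => -> ->.
Qed.

Lemma radical_rmorph_gen_neq0 (K : fieldType) (n s : nat) (R : idomainType)
    (sigma : {rmorphism {mpoly K[n]} -> R}) (B : 'I_s -> {mpoly K[n]}) f :
  radical (gen_ideal B) f -> sigma f != 0 -> exists l, sigma (B l) != 0.
Proof.
move=> [k [g fkE]] sf; case: (pickP (fun l => sigma (B l) != 0)) => [l | sB0].
  by exists l.
have : sigma (f ^+ k) = 0.
  rewrite fkE rmorph_sum big1 // => l _.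
  by rewrite rmorphM (eqP (negbFE (sB0 l))) mulr0.
by rewrite rmorphXn => /eqP; rewrite expf_eq0 (negbTE sf) andbF.
Qed.

Section KeepVariables.
Variables (K : fieldType) (n : nat) (P : pred 'I_n).

Definition keep_var (k : 'I_n) : {mpoly K[n]} := if P k then 'X_k else 0.

Definition keep_vars (p : {mpoly K[n]}) : {mpoly K[n]} :=
  mmap (@mpolyC n K) keep_var p.

HB.instance Definition _ :=
  GRing.RMorphism.copy keep_vars (mmap (@mpolyC n K) keep_var).

Lemma keep_varsZ c p : keep_vars (c *: p) = c *: keep_vars p.
Proof. by rewrite /keep_vars mmapZ mul_mpolyC. Qed.

Lemma keep_varsX u :
  keep_vars 'X_[u] = if [forall k, (0 < u k)%N ==> P k] then 'X_[u] else 0.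
Proof.
rewrite /keep_vars mmapX /mmap1 /keep_var.
case: ifPn => [/forall_inP allP | /forall_inPn [k uk notPk]]; last first.
  by rewrite (bigD1 k) //= (negbTE notPk) expr0n (negbTE (lt0n_neq0 uk)) mul0r.
rewrite mpolyXE_id; apply: eq_bigr => k _.
by case: (posnP (u k)) => [->|uk]; rewrite ?expr0 ?allP.
Qed.

End KeepVariables.

Section LawrenceToric.
Variables (K : fieldType) (m : nat) (d : 'I_m -> nat).

Definition block (k : 'I_(m + m)) : 'I_m :=
  match split k with inl i => i | inr i => i end.

Lemma block_lshift i : block (lshift m i) = i.
Proof. by rewrite /block split_lshift. Qed.

Lemma block_rshift i : block (rshift m i) = i.
Proof. by rewrite /block split_rshift. Qed.

Definition phi_exp (k : 'I_(m + m)) : 'X_{1..m.+1} :=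
  match split k with
  | inl i => (U_(@ord0 m) *+ bexp d i + U_(lift ord0 i))%MM
  | inr i => U_(lift ord0 i)%MM
  end.

Definition phi_mnm (u : 'X_{1..m + m}) : 'X_{1..m.+1} :=
  (\sum_(k < m + m) phi_exp k *+ u k)%MM.

Lemma phi_mpolyX u : phi d 'X_[u] = 'X_[phi_mnm u] :> {mpoly K[m.+1]}.
Proof.
rewrite /phi mmapX /mmap1 /phi_mnm -mprodXnE; apply: eq_bigr => k _.
by rewrite /phi_var /phi_exp; case: (split k) => i; rewrite ?mpolyXD ?mpolyXn.
Qed.

Lemma phi_binomial (a b : K) u v :
  phi d (a *: 'X_[u] + b *: 'X_[v]) = a *: 'X_[phi_mnm u] + b *: 'X_[phi_mnm v].
Proof. by rewrite /phi mmapD !mmapZ -!/(phi d _) !phi_mpolyX !mul_mpolyC. Qed.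

Lemma phi_mnmE u c : phi_mnm u c = (\sum_(k < m + m) phi_exp k c * u k)%N.
Proof. by rewrite /phi_mnm mnm_sumE; apply: eq_bigr => k _; rewrite mulmnE. Qed.

Lemma phi_mnm_ord0 u :
  phi_mnm u ord0 = (\sum_(i < m) bexp d i * u (lshift m i))%N.
Proof.
rewrite phi_mnmE big_split_ord /= [X in (_ + X)%N]big1 ?addn0 => [|i _].
  apply: eq_bigr => i _; rewrite /phi_exp split_lshift mnmDE mulmnE !mnm1E /=.
  by rewrite addn0 mul1n mulnC.
by rewrite /phi_exp split_rshift mnm1E.
Qed.

Lemma phi_mnm_lift u i :
  phi_mnm u (lift ord0 i) = (u (lshift m i) + u (rshift m i))%N.
Proof.
have e_lift j : (U_(lift ord0 j) (lift ord0 i))%MM = (j == i)%N.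
  by rewrite mnm1E (inj_eq (@lift_inj _ _)).
rewrite phi_mnmE big_split_ord /=; congr (_ + _)%N.
  rewrite (bigD1 i) //= big1 ?addn0 => [|j ji].
    rewrite /phi_exp split_lshift mnmDE mulmnE mnm1E (negbTE (neq_lift _ _)).
    by rewrite e_lift eqxx mul0n add0n mul1n.
  rewrite /phi_exp split_lshift mnmDE mulmnE mnm1E (negbTE (neq_lift _ _)).
  by rewrite e_lift (negbTE ji) mul0n.
rewrite (bigD1 i) //= big1 ?addn0 => [|j ji].
  by rewrite /phi_exp split_rshift e_lift eqxx mul1n.
by rewrite /phi_exp split_rshift e_lift (negbTE ji).
Qed.

Lemma phi_mnmD u v : phi_mnm (u + v)%MM = (phi_mnm u + phi_mnm v)%MM.
Proof.
apply/mnmP => c; rewrite mnmDE !phi_mnmE -big_split /=.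
by apply: eq_bigr => k _; rewrite mnmDE mulnDr.
Qed.

Lemma phi_mnmU k n : phi_mnm (U_(k) *+ n)%MM = (phi_exp k *+ n)%MM.
Proof.
apply/mnmP => c; rewrite phi_mnmE mulmnE (bigD1 k) //= big1 ?addn0 => [|j jk].
  by rewrite mulmnE mnm1E eqxx mul1n.
by rewrite mulmnE mnm1E eq_sym (negbTE jk) muln0.
Qed.

Definition support_blocks (u : 'X_{1..m + m}) : {set 'I_m} :=
  [set i | (0 < u (lshift m i) + u (rshift m i))%N].

Lemma support_blocks_phi u v :
  phi_mnm u = phi_mnm v -> support_blocks u = support_blocks v.
Proof. by move=> euv; apply/setP => i; rewrite !inE -!phi_mnm_lift euv. Qed.

Lemma support_blocks_subset u (A : {set 'I_m}) :
  (support_blocks u \subset A) = [forall k, (0 < u k)%N ==> (block k \in A)].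
Proof.
apply/subsetP/forall_inP => [sub k | allA i].
  case: (split_ordP k) => i -> uk; rewrite ?block_lshift ?block_rshift;
    by apply: sub; rewrite inE addn_gt0 uk ?orbT.
rewrite inE addn_gt0 => /orP[] ui.
  by rewrite -(block_lshift i); apply: allA.
by rewrite -(block_rshift i); apply: allA.
Qed.

Lemma support_blocks_sub1 u i j :
  support_blocks u \subset [set i] -> j != i ->
  u (lshift m j) = 0%N /\ u (rshift m j) = 0%N.
Proof.
move=> /subsetP sub ji; have : j \notin support_blocks u.
  by apply: contra ji => /sub; rewrite inE.
by rewrite inE -leqNgt leqn0 addn_eq0 => /andP[/eqP -> /eqP ->].
Qed.

Hypothesis d_gt0 : forall i, (0 < d i)%N.

Lemma bexp_gt0 i : (0 < bexp d i)%N.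
Proof. by apply: prodn_cond_gt0 => j _; apply: d_gt0. Qed.

Lemma phi_mnm_ord0_sub1 u i : support_blocks u \subset [set i] ->
  phi_mnm u ord0 = (bexp d i * u (lshift m i))%N.
Proof.
move=> sub; rewrite phi_mnm_ord0 (bigD1 i) //= big1 ?addn0 // => j ji.
by have [-> _] := support_blocks_sub1 sub ji; rewrite muln0.
Qed.

Lemma phi_mnm_inj_sub1 u v i : phi_mnm u = phi_mnm v ->
  support_blocks u \subset [set i] -> u = v.
Proof.
move=> euv subu; have subv : support_blocks v \subset [set i].
  by rewrite -(support_blocks_phi euv).
have esum j : (u (lshift m j) + u (rshift m j) = v (lshift m j) + v (rshift m j))%N.
  by rewrite -!phi_mnm_lift euv.
have ex : u (lshift m i) = v (lshift m i).
  by apply/eqP; rewrite -(eqn_pmul2l (bexp_gt0 i)) -!phi_mnm_ord0_sub1 // euv.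
apply/mnmP => k; case: (split_ordP k) => j -> {k}; have [-> | ji] := eqVneq j i.
- exact: ex.
- have [-> _] := support_blocks_sub1 subu ji.
  by have [-> _] := support_blocks_sub1 subv ji.
- by apply/(@addnI (u (lshift m i))); rewrite {2}ex esum.
- have [_ ->] := support_blocks_sub1 subu ji.
  by have [_ ->] := support_blocks_sub1 subv ji.
Qed.

Lemma toric_binomial_exponents (a b : K) u v :
  toric_ideal d (a *: 'X_[u] + b *: 'X_[v]) -> a *: 'X_[u] + b *: 'X_[v] != 0 ->
  phi_mnm u = phi_mnm v /\ u != v.
Proof.
rewrite /toric_ideal phi_binomial => /eqP; rewrite !binomial_eq0.
case: (eqVneq (phi_mnm u)) => [euv ab0 | _ /andP[/eqP-> /eqP->]]; last first.
  by rewrite addr0 eqxx if_same.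
by case: eqVneq => [_ | //]; rewrite ab0.
Qed.

Definition keep_blocks (A : {set 'I_m}) : {mpoly K[m + m]} -> {mpoly K[m + m]} :=
  @keep_vars K _ (fun k => block k \in A).

HB.instance Definition _ A := GRing.RMorphism.on (keep_blocks A).

Lemma keep_blocks_binomial A (a b : K) u v : phi_mnm u = phi_mnm v ->
  keep_blocks A (a *: 'X_[u] + b *: 'X_[v]) =
  if support_blocks u \subset A then a *: 'X_[u] + b *: 'X_[v] else 0.
Proof.
move=> euv; rewrite /keep_blocks raddfD /= !keep_varsZ !keep_varsX.
rewrite -!support_blocks_subset -(support_blocks_phi euv).
by case: ifP; rewrite ?scaler0 ?addr0.
Qed.

Lemma bexp_mul i : (bexp d i * d i = \prod_(k < m) d k)%N.
Proof. by rewrite /bexp [in RHS](bigD1 i) //= mulnC. Qed.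

Lemma toric_pair_binomial i j : i != j ->
  exists f, [/\ toric_ideal d f, keep_blocks [set i; j] f = f & f != 0].
Proof.
move=> ij.
pose u := (U_(lshift m i) *+ d i + U_(rshift m j) *+ d j)%MM.
pose v := (U_(rshift m i) *+ d i + U_(lshift m j) *+ d j)%MM.
have euv : phi_mnm u = phi_mnm v.
  rewrite !phi_mnmD !phi_mnmU /phi_exp !split_lshift !split_rshift.
  have := bexp_mul i; rewrite -(bexp_mul j) => bij.
  apply/mnmP => c; rewrite !mnmDE !mulmnE !mnmDE !mulmnE !mnm1E.
  by case: (ord0 == c); case: (lift ord0 i == c); case: (lift ord0 j == c) => /=; lia.
have u_sub : support_blocks u \subset [set i; j].
  rewrite support_blocks_subset; apply/forallP => k; apply/implyP.
  rewrite /u mnmDE !mulmnE !mnm1E.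
  have [<- _|_] := eqVneq (lshift m i) k; first by rewrite block_lshift !inE eqxx.
  have [<- _|_] := eqVneq (rshift m j) k; first by rewrite block_rshift !inE eqxx orbT.
  by rewrite !mul0n.
have uv : u != v.
  apply/negP => /eqP /mnmP /(_ (lshift m i)).
  rewrite /u /v !mnmDE !mulmnE !mnm1E eqxx ![rshift _ _ == _]eq_sym !lshift_neq_rshift.
  by rewrite (inj_eq (@lshift_inj _ _)) [j == i]eq_sym (negbTE ij); have := d_gt0 i; lia.
exists (1 *: 'X_[u] + (-1) *: 'X_[v]); split.
- by rewrite /toric_ideal phi_binomial euv scaleN1r scale1r subrr.
- by rewrite keep_blocks_binomial // u_sub.
- by rewrite binomial_eq0 (negbTE uv) oner_eq0.
Qed.

Lemma toric_binomial_keep_blocks_uniq p (A A' : {set 'I_m}) :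
  is_binomial p -> toric_ideal d p -> #|A| = 2 -> #|A'| = 2 ->
  keep_blocks A p != 0 -> keep_blocks A' p != 0 -> A = A'.
Proof.
move=> [a [b [u [v ->]]]] p_toric cA cA' keepA keepA'.
have p_neq0 : a *: 'X_[u] + b *: 'X_[v] != 0.
  by apply: contraNneq keepA => ->; rewrite raddf0.
have [euv uv] := toric_binomial_exponents p_toric p_neq0.
have in_support k k' : support_blocks u \subset [set k; k'] ->
    k \in support_blocks u.
  move=> /subsetP sub; apply: contraR uv => kS; apply/eqP.
  apply: (phi_mnm_inj_sub1 (i := k') euv); apply/subsetP => l lS.
  have := sub l lS; rewrite !inE => /orP[/eqP lk | //].
  by rewrite -lk lS in kS.
have support_eq (C : {set 'I_m}) : #|C| = 2 ->
    keep_blocks C (a *: 'X_[u] + b *: 'X_[v]) != 0 -> support_blocks u = C.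
  move=> /eqP /cards2P [k [k' [_ ->]]]; rewrite keep_blocks_binomial //.
  case: ifP => [sub _ | _]; last by rewrite eqxx.
  apply/eqP; rewrite eqEsubset sub subUset !sub1set (in_support _ _ sub).
  by rewrite (in_support k' k) // setUC.
by rewrite -(support_eq A) // -(support_eq A').
Qed.

End LawrenceToric.

Theorem theorem4p10 (K : fieldType) (m : nat) (d : 'I_m -> nat) :
  (2 <= m)%N -> (forall i, (0 < d i)%N) ->
  forall s : nat, binomial_radical_gens (@toric_ideal K m d) s ->
  (m * (m - 1) <= 2 * s)%N.
Proof.
move=> _ d_gt0 s [B [B_toric rad_eq]].
have := card_2subsets 'I_m; rewrite card_ord => ->.
rewrite leq_pmul2l // -[s]card_ord.
apply: (@leq_card_witness _ 'I_s _ (fun A l => keep_blocks A (B l) != 0)).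
  move=> A; rewrite inE => /cards2P [i [j [ij ->]]].
  have [f [f_toric keep_f f_neq0]] := toric_pair_binomial K d_gt0 ij.
  have f_rad : radical (gen_ideal B) f by apply/rad_eq; exists 1%N; rewrite expr1.
  by apply: radical_rmorph_gen_neq0 f_rad _; rewrite /= keep_f.
move=> A A' l; rewrite !inE => /eqP cA /eqP cA'.
by have [B_bin B_tor] := B_toric l; apply: toric_binomial_keep_blocks_uniq.
Qed.
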